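(* Let $\mathcal{C}$ be a category, $A,B$ objects of $\mathcal{C}$, and $L\subseteq\mathcal{C}(A,B)$ a regular language of arrows. If $F:\mathcal{C}\to\mathcal{D}$ is a finitary ULF functor of categories, then the image $F(L)\subseteq\mathcal{D}(F(A),F(B))$ is a regular language of arrows in $\mathcal{D}$.
   Context: Composition is written diagrammatically. A functor $p:\mathcal{Q}\to\mathcal{C}$ is ULF if for every arrow $\alpha$ of $\mathcal{Q}$ and arrows $u,v$ of $\mathcal{C}$ with $p(\alpha)=uv$ there is a unique pair $\beta,\gamma$ with $\alpha=\beta\gamma$, $p(\beta)=u$, $p(\gamma)=v$; it is finitary if the fibers $p^{-1}(A)$ over objects and $p^{-1}(w)$ over arrows are all finite. A nondeterministic finite-state automaton over $\mathcal{C}$ is a tuple $M=(\mathcal{C},\mathcal{Q},p,q_0,q_f)$ with $p:\mathcal{Q}\to\mathcal{C}$ finitary ULF and $q_0,q_f$ objects of $\mathcal{Q}$; it recognizes $\{p(\alpha)\mid\alpha:q_0\to q_f\}\subseteq\mathcal{C}(p(q_0),p(q_f))$. A subset $L\subseteq\mathcal{C}(A,B)$ is a regular language of arrows if it is the language recognized by such an automaton with $p(q_0)=A$ and $p(q_f)=B$. *)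

From Stdlib Require Import List.
Set Implicit Arguments.
Unset Strict Implicit.

(* Composition is diagrammatic: comp f g = "f then g". *)
Record Category := {
  Ob :> Type;
  Hom : Ob -> Ob -> Type;
  idc : forall a, Hom a a;
  comp : forall a b c, Hom a b -> Hom b c -> Hom a c;
  comp_id_l : forall a b (f : Hom a b), comp (idc a) f = f;
  comp_id_r : forall a b (f : Hom a b), comp f (idc b) = f;
  comp_assoc : forall a b c d (f : Hom a b) (g : Hom b c) (h : Hom c d),
      comp (comp f g) h = comp f (comp g h)
}.

Arguments Hom {C} a b : rename.
Arguments idc {C} a : rename.
Arguments comp {C a b c} f g : rename.

Record Functor (C D : Category) := {
  fob :> Ob C -> Ob D;
  fmap : forall a b : Ob C, Hom a b -> Hom (fob a) (fob b);
  fmap_id : forall a, fmap (idc a) = idc (fob a);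
  fmap_comp : forall a b c (f : Hom a b) (g : Hom b c),
      fmap (comp f g) = comp (fmap f) (fmap g)
}.

Arguments fmap {C D} F {a b} f : rename.

(* An arrow packaged together with its domain and codomain; used to state
   equalities between arrows whose (co)domains are only propositionally equal. *)
Definition Arr (C : Category) := {a : Ob C & {b : Ob C & Hom a b}}.
Definition pk {C : Category} {a b : Ob C} (f : Hom a b) : Arr C :=
  existT _ a (existT _ b f).
Definition mapArr {C D : Category} (F : Functor C D) (x : Arr C) : Arr D :=
  pk (fmap F (projT2 (projT2 x))).

Definition finite_subset {T : Type} (P : T -> Prop) : Prop :=
  exists s : list T, forall x, P x -> In x s.

Definition ULF {Q C : Category} (p : Functor Q C) : Prop :=
  forall (x y : Ob Q) (alpha : Hom x y) (c : Ob C)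
         (u : Hom (p x) c) (v : Hom c (p y)),
    fmap p alpha = comp u v ->
    exists! t : {z : Ob Q & (Hom x z * Hom z y)%type},
      alpha = comp (fst (projT2 t)) (snd (projT2 t)) /\
      pk (fmap p (fst (projT2 t))) = pk u /\
      pk (fmap p (snd (projT2 t))) = pk v.

Definition finitary {Q C : Category} (p : Functor Q C) : Prop :=
  (forall A : Ob C, finite_subset (fun x : Ob Q => p x = A)) /\
  (forall w : Arr C, finite_subset (fun a : Arr Q => mapArr p a = w)).

(* Language recognized by the automaton (C, Q, p, q0, qf), viewed as a
   subset of C(A,B) when p q0 = A and p qf = B. *)
Definition recognizes {C Q : Category} (p : Functor Q C) (q0 qf : Ob Q)
  {A B : Ob C} (L : Hom A B -> Prop) : Prop :=
  forall f : Hom A B, L f <-> exists alpha : Hom q0 qf, pk (fmap p alpha) = pk f.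

Definition regular_language {C : Category} {A B : Ob C} (L : Hom A B -> Prop)
  : Prop :=
  exists (Q : Category) (p : Functor Q C) (q0 qf : Ob Q),
    ULF p /\ finitary p /\ p q0 = A /\ p qf = B /\ recognizes p q0 qf L.

Definition image_lang {C D : Category} (F : Functor C D) {A B : Ob C}
  (L : Hom A B -> Prop) : Hom (F A) (F B) -> Prop :=
  fun g => exists f : Hom A B, L f /\ fmap F f = g.

(* An automaton recognizing L is a finitary ULF functor p : Q -> C with
   chosen states q0, qf.  Composing with F gives p;F : Q -> D, which is
   again ULF (lift a factorization first along F, then along p) and
   finitary (a fiber of p;F is a finite union of fibers of p).  Its language
   from q0 to qf consists of the F (p alpha), i.e. it is exactly F(L). *)
From Stdlib Require Import List Eqdep.

Definition functor_comp {Q C D : Category} (p : Functor Q C) (F : Functor C D)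
  : Functor Q D.
Proof.
  refine {| fob := fun x => F (p x); fmap := fun a b f => fmap F (fmap p f) |}.
  - intros a. rewrite !fmap_id. reflexivity.
  - intros a b c f g. rewrite !fmap_comp. reflexivity.
Defined.

Lemma pk_inj {C : Category} {a b : Ob C} (f g : Hom a b) : pk f = pk g -> f = g.
Proof.
  intros E. unfold pk in E. apply inj_pair2 in E. apply inj_pair2 in E. exact E.
Qed.

Lemma pk_fmap {C D : Category} (F : Functor C D) {a b a' b' : Ob C}
  (f : Hom a b) (g : Hom a' b') :
  pk f = pk g -> pk (fmap F f) = pk (fmap F g).
Proof. intros E. exact (f_equal (mapArr F) E). Qed.

Lemma finite_subset_preimage_list {T U : Type} (g : T -> U) (s : list U) :
  (forall c, finite_subset (fun x => g x = c)) ->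
  finite_subset (fun x => In (g x) s).
Proof.
  intros Hfib. induction s as [|c s [l Hl]].
  - exists nil. intros x [].
  - destruct (Hfib c) as [l' Hl'].
    exists (l' ++ l). intros x [Hx|Hx]; apply in_or_app; auto.
Qed.

Lemma finite_subset_preimage {T U : Type} (g : T -> U) (P : U -> Prop) :
  finite_subset P -> (forall c, finite_subset (fun x => g x = c)) ->
  finite_subset (fun x => P (g x)).
Proof.
  intros [s Hs] Hfib.
  destruct (finite_subset_preimage_list g s Hfib) as [l Hl].
  exists l. auto.
Qed.

Lemma functor_comp_finitary {Q C D : Category} (p : Functor Q C) (F : Functor C D) :
  finitary p -> finitary F -> finitary (functor_comp p F).
Proof.
  intros [Hp_ob Hp_arr] [HF_ob HF_arr]. split.
  - intros A. exact (finite_subset_preimage (fob p) _ (HF_ob A) Hp_ob).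
  - intros w. exact (finite_subset_preimage (mapArr p) _ (HF_arr w) Hp_arr).
Qed.

Lemma functor_comp_ULF {Q C D : Category} (p : Functor Q C) (F : Functor C D) :
  ULF p -> ULF F -> ULF (functor_comp p F).
Proof.
  intros Hp HF x y alpha c u v Halpha.
  destruct (HF _ _ _ c u v Halpha) as [[z' [u' v']] [[Hfac' [Hu' Hv']] Huniq']].
  simpl in *.
  destruct (Hp _ _ alpha z' u' v' Hfac') as [[z [b g]] [[Hfac [Hb Hg]] Huniq]].
  simpl in *.
  exists (existT _ z (b, g)). split.
  - simpl. repeat split; [exact Hfac | |].
    + rewrite (pk_fmap F _ _ Hb). exact Hu'.
    + rewrite (pk_fmap F _ _ Hg). exact Hv'.
  - intros [z2 [b2 g2]] [Hfac2 [Hb2 Hg2]]. simpl in *.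
    apply Huniq. simpl.
    (* The p-image of a competing lift is an F-lift, hence the one found first. *)
    assert (Hdown : existT (fun w => (Hom (p x) w * Hom w (p y))%type) z' (u', v')
                    = existT _ (p z2) (fmap p b2, fmap p g2)).
    { apply Huniq'. simpl. repeat split; [|exact Hb2|exact Hg2].
      rewrite Hfac2. apply fmap_comp. }
    repeat split; [exact Hfac2 | |].
    + exact (eq_sym (f_equal (fun t => pk (fst (projT2 t))) Hdown)).
    + exact (eq_sym (f_equal (fun t => pk (snd (projT2 t))) Hdown)).
Qed.

Lemma recognizes_image {Q C D : Category} (p : Functor Q C) (F : Functor C D)
  (q0 qf : Ob Q) (L : Hom (p q0) (p qf) -> Prop) :
  recognizes p q0 qf L ->
  recognizes (functor_comp p F) q0 qf (@image_lang C D F _ _ L).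
Proof.
  intros Hrec g. split.
  - intros [f [Lf <-]]. destruct (proj1 (Hrec f) Lf) as [alpha Halpha].
    exists alpha. exact (pk_fmap F _ _ Halpha).
  - intros [alpha Halpha]. exists (fmap p alpha). split.
    + apply Hrec. exists alpha. reflexivity.
    + exact (pk_inj _ _ Halpha).
Qed.

Theorem mainTheorem10 (C D : Category) (A B : Ob C) (L : Hom A B -> Prop)
  (F : Functor C D) :
  regular_language L -> ULF F -> finitary F ->
  regular_language (@image_lang C D F A B L).
Proof.
  intros [Q [p [q0 [qf [Hulf [Hfin [<- [<- Hrec]]]]]]]] HF_ulf HF_fin.
  exists Q, (functor_comp p F), q0, qf.
  split; [exact (functor_comp_ULF p F Hulf HF_ulf)|].
  split; [exact (functor_comp_finitary p F Hfin HF_fin)|].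
  split; [reflexivity|]. split; [reflexivity|].
  exact (recognizes_image p F q0 qf L Hrec).
Qed.
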